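(* Let $G$ be a finite simple undirected graph with adjacency matrix $A$, and let $a,b$ be vertices of $G$. Then the closure in $\mathbb{C}$ of the set $\{\exp(\mathrm{i}tA)_{a,b} : t\ge 0\}$ is invariant under complex conjugation. *)

From HB Require Import structures.
From mathcomp Require Import all_boot all_order all_algebra.
From mathcomp Require Import complex.
From mathcomp Require Import all_classical all_reals all_analysis.
Set Implicit Arguments. Unset Strict Implicit. Unset Printing Implicit Defensive.
Import Order.TTheory GRing.Theory Num.Theory.
Import numFieldTopology.Exports numFieldNormedType.Exports.
Local Open Scope classical_set_scope.
Local Open Scope ring_scope.

Definition cplx (R : realType) : numClosedFieldType := R[i].

Definition RtoC (R : realType) (t : R) : cplx R := (t%:C)%C.

Definition expmx (R : realType) (n : nat) (M : 'M[cplx R]_n.+1)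
  : 'M[cplx R]_n.+1 :=
  \matrix_(a, b) limn (series (fun k : nat => (M ^+ k) a b / (k`!)%:R)).

Definition simple_graph (n : nat) (e : rel 'I_n.+1) : Prop :=
  (forall x, ~~ e x x) /\ (forall x y, e x y = e y x).

Definition adjmx (R : realType) (n : nat) (e : rel 'I_n.+1) : 'M[cplx R]_n.+1 :=
  \matrix_(x, y) (if e x y then 1 else 0).

(* Since A is real symmetric, exp(itA)_{ab} = f(t) := sum_j w_j e^{i t lam_j}
   with real eigenvalues lam_j, and f(t)^* = f(-t) because A has real entries.  By a
   Dirichlet-type recurrence argument (compactness of the torus), for every
   eps there are arbitrarily large T with |e^{i T lam_j} - 1| < eps for all j;
   such a T is a uniform eps-almost period of f.  Choosing T >= t, the value
   f(t)^* = f(-t) is approximated by f(T - t) with T - t >= 0, so conjugation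
   maps the orbit {f(t) : t >= 0} into its closure, and being an isometric
   involution it preserves that closure. *)
From HB Require Import structures.
From mathcomp Require Import all_boot all_order all_algebra.
From mathcomp Require Import complex.
From mathcomp Require Import all_classical all_reals all_analysis.
From mathcomp Require Import ring.
Import Order.TTheory GRing.Theory Num.Theory.
Import numFieldTopology.Exports numFieldNormedType.Exports.
Set Implicit Arguments. Unset Strict Implicit. Unset Printing Implicit Defensive.
Local Open Scope classical_set_scope.
Local Open Scope ring_scope.

Lemma closure_distP (K : numFieldType) (A : set K) (p : K) :
  closure A p <-> forall eps, 0 < eps -> exists2 x, A x & `|p - x| < eps.
Proof.
split=> [Ap eps eps0 | Ap B /nbhs_ballP[eps eps0 epsB]].
  by have [x [Ax px]] := Ap _ (nbhsx_ballx p eps eps0); exists x.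
by have [x Ax px] := Ap eps eps0; exists x; split => //; exact: epsB.
Qed.

Lemma cvg_conjC (C : numClosedFieldType) (u : nat -> C) (l : C) :
  u @ \oo --> l -> (fun k => (u k)^*) @ \oo --> l^*.
Proof.
move=> /cvgrPdist_lt ul; apply/cvgrPdist_lt => eps eps0.
by near=> k; rewrite -rmorphB norm_conjC; near: k; exact: ul.
Unshelve. all: by end_near.
Qed.

Lemma compact_seq_ball (R : numFieldType) (T : pseudoMetricType R) (K : set T)
    (v : nat -> T) (eps : R) :
  compact K -> (forall k, K (v k)) -> 0 < eps ->
  exists k1 k2, (k1 < k2)%N /\ ball (v k1) eps (v k2).
Proof.
move=> cK Kv eps0; have eps2 : 0 < eps / 2 by rewrite divr_gt0.
have [p [_ clp]] : K `&` cluster (v @ \oo) !=set0.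
  by apply: cK; apply: (@filterE _ (nbhs \oo) _ (v @^-1` K)).
have near_p K0 : exists2 k, (K0 <= k)%N & ball p (eps / 2) (v k).
  have tail : (v @ \oo) (v @` [set k | (K0 <= k)%N]).
    by apply: filterS (nbhs_infty_ge K0) => k K0k; exists k.
  by have [_ [[k K0k <-] pk]] := clp _ _ tail (nbhsx_ballx p _ eps2); exists k.
have [k1 _ p1] := near_p 0%N; have [k2 k12 p2] := near_p k1.+1.
exists k1, k2; split => //.
by rewrite (splitr eps); exact: ball_triangle (ball_sym p1) p2.
Qed.

Section Expi.
Variable R : realType.

Definition expi (x : R) : cplx R := (cos x +i* sin x)%C.

Lemma expiD (x y : R) : expi (x + y) = expi x * expi y.
Proof.
rewrite /expi cosD sinD /=; congr (_ +i* _)%C; rewrite /GRing.mul /=; ring.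
Qed.

Lemma norm_expi (x : R) : `|expi x| = 1.
Proof. by rewrite normc_def /= cos2Dsin2 sqrtr1. Qed.

Lemma norm_expiB1 (x y : R) : `|expi (x - y) - 1| = `|expi x - expi y|.
Proof.
have -> : expi x - expi y = (expi (x - y) - 1) * expi y.
  by rewrite mulrBl -expiD subrK mul1r.
by rewrite normrM norm_expi mulr1.
Qed.

Lemma normc_le (x y : R) : `|(x +i* y)%C : cplx R| <= ((`|x| + `|y|)%:C)%C.
Proof.
have -> : (x +i* y)%C = (x%:C)%C + 'i * (y%:C)%C :> cplx R.
  by apply/eqP; rewrite eq_complex /= !(mul0r, mul1r, subr0, addr0, add0r) !eqxx.
apply: le_trans (ler_normD _ _) _.
rewrite normrM normCi mul1r !normc_def /= !expr0n /= !addr0 !sqrtr_sqr.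
by rewrite lecE /= addr0 !eqxx lexx.
Qed.

Lemma cvg_complex (u v : nat -> R) (x y : R) :
  u @ \oo --> x -> v @ \oo --> y ->
  (fun k => (u k +i* v k)%C : cplx R) @ \oo --> ((x +i* y)%C : cplx R).
Proof.
move=> /cvgrPdist_lt ux /cvgrPdist_lt vy; apply/cvgrPdist_lt => eps.
rewrite ltcE /= => /andP[/eqP Im_eps Re_eps0].
have eps2 : 0 < complex.Re eps / 2 by rewrite divr_gt0.
near=> k; apply: le_lt_trans (normc_le _ _) _.
rewrite ltcE /= Im_eps eqxx [complex.Re eps]splitr ltrD //.
  by near: k; exact: ux.
by near: k; exact: vy.
Unshelve. all: by end_near.
Qed.

Lemma series_complex (u v : nat -> R) (N : nat) :
  series (fun k => (u k +i* v k)%C : cplx R) N = (series u N +i* series v N)%C.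
Proof.
rewrite /series /=; elim: N => [|N IH]; first by rewrite !big_geq.
by rewrite !big_nat_recr //= IH.
Qed.

Lemma expr_iRtoC (x : R) (k : nat) :
  ('i * RtoC x) ^+ k = (((~~ odd k)%:R * (-1) ^+ k./2 * x ^+ k) +i*
                        ((odd k)%:R * (-1) ^+ k.-1./2 * x ^+ k))%C.
Proof.
elim: k => [|k IH].
  by apply/eqP; rewrite eq_complex /= !(mul1r, mul0r, expr0) !eqxx.
rewrite exprSr IH /RtoC; apply/eqP; rewrite eq_complex /=.
case k_odd: (odd k) => /=.
  have k2 : k = (k./2).*2.+1 by rewrite -[k in LHS]odd_double_half k_odd.
  have -> : uphalf k = (k./2).+1 by rewrite uphalf_half k_odd.
  have -> : k.-1./2 = k./2 by rewrite {1}k2 /= doubleK.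
  by rewrite !exprS; apply/andP; split; apply/eqP; ring.
have -> : uphalf k = k./2 by rewrite uphalf_half k_odd.
by rewrite !exprS; apply/andP; split; apply/eqP; ring.
Qed.

Lemma cvg_exp_series_expi (x : R) :
  series (fun k => ('i * RtoC x) ^+ k / (k`!)%:R) @ \oo --> expi x.
Proof.
have -> : series (fun k => ('i * RtoC x) ^+ k / (k`!)%:R) =
          (fun N => (series (cos_coeff x) N +i* series (sin_coeff x) N)%C).
  apply/funext => N; rewrite -series_complex; congr (series _ N).
  apply/funext => k; rewrite expr_iRtoC -(rmorph_nat (real_complex R)) -fmorphV.
  by apply/eqP; rewrite eq_complex /= !(mulr0, subr0, addr0, add0r) !eqxx.
apply: cvg_complex; rewrite unlock.
  exact: is_cvg_series_cos_coeff.
exact: is_cvg_series_sin_coeff.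
Qed.

Lemma conjC_iRtoC (t : R) : ('i * RtoC t)^* = 'i * RtoC (- t).
Proof.
have RtoC_real : RtoC t \is Num.real by rewrite /RtoC complex_real.
by rewrite rmorphM /= conjCi (CrealP RtoC_real) /RtoC rmorphN mulrN mulNr.
Qed.

End Expi.

Section AlmostPeriods.
Variable R : realType.

Lemma expi_recurrence (m : nat) (lam : 'I_m -> R) (delta : cplx R) (N0 : R) :
  0 < delta ->
  exists2 T : R, N0 <= T & forall j, `|expi (T * lam j) - 1| < delta.
Proof.
rewrite ltcE /= => /andP[/eqP Im_delta r0]; set r := complex.Re delta in r0.
pose N := (Num.truncn `|N0|).+1.
have N0N : N0 < N%:R by apply: le_lt_trans (ler_norm N0) (truncnS_gt _).
(* Two of the torus points (cos, sin)(N k lam_j) are close by compactness; the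
   factor N makes the resulting return time N (k2 - k1) exceed N0. *)
pose th (k : nat) (j : 'I_m) := (N * k)%:R * lam j.
pose v (k : nat) : 'rV[R]_(m + m) :=
  row_mx (\row_j cos (th k j)) (\row_j sin (th k j)).
pose K := [set w : 'rV[R]_(m + m) | forall i, `[-1, 1]%classic (w ord0 i)].
have cK : compact K.
  exact: (@rV_compact R _ (fun=> `[-1, 1]%classic)
                      (fun=> @segment_compact R _ _)).
have Kv k : K (v k).
  move=> i /=; rewrite -(splitK i); case: (fintype.split i) => j /=.
    by rewrite row_mxEl mxE /= in_itv /= -ler_norml cos_max.
  by rewrite row_mxEr mxE /= in_itv /= -ler_norml sin_max.
have r2 : 0 < r / 2 by rewrite divr_gt0.
have [k1 [k2 [k12 [_ v12]]]] := compact_seq_ball cK Kv r2.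
exists (N * (k2 - k1))%:R.
  by apply/ltW/(lt_le_trans N0N); rewrite ler_nat leq_pmulr ?subn_gt0.
move=> j; have := v12 ord0 (lshift m j); have := v12 ord0 (rshift m j).
rewrite /ball /= /v !row_mxEl !row_mxEr !mxE => dsin dcos.
have -> : (N * (k2 - k1))%:R * lam j = th k2 j - th k1 j.
  by rewrite /th mulnBr natrB ?mulrBl // leq_mul2l ltnW ?orbT.
rewrite norm_expiB1; apply: le_lt_trans (normc_le _ _) _.
rewrite ltcE /= Im_delta eqxx /= -/r [r]splitr ltrD // distrC //.
Qed.

Definition trig_sum (m : nat) (w : 'I_m -> cplx R) (lam : 'I_m -> R) (t : R)
  : cplx R := \sum_j w j * expi (t * lam j).

Definition large_almost_periods (f : R -> cplx R) : Prop :=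
  forall (eps : cplx R) (N0 : R), 0 < eps ->
  exists2 T : R, N0 <= T & forall t, `|f (t + T) - f t| < eps.

Lemma trig_sum_large_almost_periods (m : nat) (w : 'I_m -> cplx R)
    (lam : 'I_m -> R) :
  large_almost_periods (trig_sum w lam).
Proof.
move=> eps N0 eps0; pose W : cplx R := \sum_j `|w j|.
have W1 : 0 < W + 1 by rewrite ltr_wpDl ?sumr_ge0.
have [T N0T Tlam] := expi_recurrence lam N0 (divr_gt0 eps0 W1).
exists T => // t; rewrite /trig_sum -sumrB.
apply: le_lt_trans (ler_norm_sum _ _ _) _.
apply: (@le_lt_trans _ _ (\sum_j `|w j| * (eps / (W + 1)))).
  apply: ler_sum => j _; rewrite mulrDl expiD -mulrBr normrM ler_wpM2l //.
  rewrite -[X in _ - X]mulr1 -mulrBr normrM norm_expi mul1r.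
  exact/ltW/Tlam.
rewrite -mulr_suml mulrCA gtr_pMr // ltr_pdivrMr // mul1r.
by rewrite ltrDl ltr01.
Qed.

Lemma closure_image_nonneg_conj (f : R -> cplx R) :
  (forall t, (f t)^* = f (- t)) -> large_almost_periods f ->
  let S := closure [set f t | t in [set t | 0 <= t]] in
  [set z^* | z in S] = S.
Proof.
move=> f_conj f_ap S.
suff conjS z : S z -> S z^*.
  apply/seteqP; split=> [_ [z Sz <-] | z Sz]; first exact: conjS.
  by exists z^*; [exact: conjS | exact: conjCK].
move=> /closure_distP Sz; apply/closure_distP => eps eps0.
have eps2 : 0 < eps / 2 by rewrite divr_gt0.
have [_ [t t0 <-] zt] := Sz _ eps2.
have [T tT fT] := f_ap _ t eps2.
exists (f (- t + T)); first by exists (- t + T); rewrite //= addrC subr_ge0.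
have -> : z^* - f (- t + T) = (z - f t)^* + (f (- t) - f (- t + T)).
  by rewrite -f_conj rmorphB addrA subrK.
apply: le_lt_trans (ler_normD _ _) _.
by rewrite norm_conjC [eps]splitr ltrD // distrC.
Qed.

End AlmostPeriods.

Lemma exprn_similar_diag (C : comUnitRingType) (m : nat) (P : 'M[C]_m.+1)
    (d : 'rV[C]_m.+1) (k : nat) :
  P \in unitmx ->
  (invmx P *m diag_mx d *m P) ^+ k =
  invmx P *m diag_mx (map_mx (fun x => x ^+ k) d) *m P.
Proof.
move=> Punit; elim: k => [|k IH].
  have -> : map_mx (fun x => x ^+ 0) d = const_mx 1.
    by apply/rowP => j; rewrite !mxE.
  by rewrite expr0 diag_const_mx mulmx1 mulVmx.
rewrite exprSr -mulmxE IH !mulmxA mulmxK // -[_ *m diag_mx d]mulmxA mulmx_diag.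
by congr (_ *m diag_mx _ *m _); apply/rowP => j; rewrite !mxE exprSr.
Qed.

Section ExpMatrix.
Variables (R : realType) (n : nat).
Implicit Types (A M : 'M[cplx R]_n.+1) (a b : 'I_n.+1).

Definition expmx_term M a b (k : nat) : cplx R := (M ^+ k) a b / (k`!)%:R.

Lemma cvg_expmx_series_hermitian A a b : A \is hermsymmx ->
  exists (w : 'I_n.+1 -> cplx R) (lam : 'I_n.+1 -> R), forall t : R,
    series (expmx_term (('i * RtoC t) *: A) a b) @ \oo --> trig_sum w lam t.
Proof.
move=> A_herm; have /hermitian_normalmx/orthomx_spectralP AE := A_herm.
have /mxOverP d_real := hermitian_spectral_diag_real A_herm.
set P := spectralmx A in AE; set d := spectral_diag A in AE d_real.
exists (fun j => invmx P a j * P j b), (fun j => complex.Re (d 0 j)) => t.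
have termE k : expmx_term (('i * RtoC t) *: A) a b k =
    \sum_j invmx P a j * P j b *
      (('i * RtoC (t * complex.Re (d 0 j))) ^+ k / (k`!)%:R).
  rewrite /expmx_term exprZn AE exprn_similar_diag ?spectral_unit //.
  rewrite mul_mx_diag !mxE big_distrr mulr_suml; apply: eq_bigr => j _.
  by rewrite !mxE /RtoC rmorphM /= (RRe_real (d_real 0 j)) !exprMn; ring.
have -> : series (expmx_term (('i * RtoC t) *: A) a b) =
  (fun N => \sum_j invmx P a j * P j b *
     series (fun k => ('i * RtoC (t * complex.Re (d 0 j))) ^+ k / (k`!)%:R) N).
  apply/funext => N; rewrite /series /= (eq_bigr _ (fun k _ => termE k)).
  by rewrite exchange_big; apply: eq_bigr => j _; rewrite big_distrr.
apply: (@cvg_big _ _ +%R 0 xpredT (@add_continuous _)) => j _.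
by apply: cvgMl_tmp; exact: cvg_exp_series_expi.
Qed.

Lemma conjC_expmx_series A a b (t : R) (N : nat) : A \is a realmx ->
  (series (expmx_term (('i * RtoC t) *: A) a b) N)^* =
  series (expmx_term (('i * RtoC (- t)) *: A) a b) N.
Proof.
move=> A_real; rewrite /series /= rmorph_sum; apply: eq_bigr => k _.
have Ak_real : ((A ^+ k) a b)^* = (A ^+ k) a b.
  by rewrite -[in RHS](realmxC A_real) -rmorphXn /= mxE.
rewrite /expmx_term !exprZn !mxE rmorphM rmorphM fmorphV rmorph_nat rmorphXn /=.
by rewrite conjC_iRtoC Ak_real.
Qed.

Theorem closure_expmx_entry_conj A a b :
  A \is symmetricmx -> A \is a realmx ->
  let S := closure [set expmx (('i * RtoC t) *: A) a b | t in [set t : R | 0 <= t]] in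
  [set z^* | z in S] = S.
Proof.
move=> A_sym A_real.
have A_herm := realsym_hermsym A_sym A_real.
have [w [lam cvgA]] := cvg_expmx_series_hermitian a b A_herm.
have expmxE t : expmx (('i * RtoC t) *: A) a b = trig_sum w lam t.
  by rewrite mxE; exact: cvg_lim (cvgA t).
have -> : (fun t => expmx (('i * RtoC t) *: A) a b) = trig_sum w lam.
  by apply/funext => t; exact: expmxE.
apply: closure_image_nonneg_conj; last exact: trig_sum_large_almost_periods.
move=> t; have := cvg_conjC (cvgA t).
under eq_fun do rewrite conjC_expmx_series //.
move=> /(cvg_lim (@norm_hausdorff _ _)) <-.
exact: cvg_lim (cvgA (- t)).
Qed.

End ExpMatrix.

Lemma adjmx_real (R : realType) (n : nat) (e : rel 'I_n.+1) :
  adjmx R e \is a realmx.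
Proof.
by apply/mxOverP => x y; rewrite mxE; case: (e x y); rewrite ?real1 ?real0.
Qed.

Lemma adjmx_symmetric (R : realType) (n : nat) (e : rel 'I_n.+1) :
  (forall x y, e x y = e y x) -> adjmx R e \is symmetricmx.
Proof.
move=> e_sym; apply/is_hermitianmxP.
by rewrite expr0 scale1r; apply/matrixP => x y; rewrite !mxE e_sym.
Qed.

Theorem corollary4p1 (R : realType) (n : nat) (e : rel 'I_n.+1)
    (a b : 'I_n.+1) :
  simple_graph e ->
  let S : set (cplx R) :=
    closure [set expmx (('i * RtoC t) *: adjmx R e) a b | t in [set t : R | 0 <= t]] in
  [set z^* | z in S] = S.
Proof.
move=> [_ e_sym]; apply: closure_expmx_entry_conj.
  exact: adjmx_symmetric.
exact: adjmx_real.
Qed.
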